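(* Let $f:X\to Y$ be a continuous map between metric spaces, let $q:[a,b]\to X$ be a continuous path, and suppose that $p=f\circ q$ is rectifiable. Then: (1) if $q(a)\ne q(b)$, there exists $\tau\in[a,b]$ such that $\ell(p)\ge D^-_{q(\tau)}f\cdot d(q(a),q(b))$; (2) if $0<\inf_{x\in\operatorname{Im}q}D_x^-f<\infty$, then $\ell(p)\ge \inf_{x\in\operatorname{Im}q}D_x^-f\cdot\ell(q)$.
   Context: The length of a path $q:[a,b]\to X$ in a metric space is $\ell(q)=\sup\sum_{i=0}^{n-1}d(q(t_i),q(t_{i+1}))$ over all partitions $a=t_0\le\dots\le t_n=b$ (possibly $+\infty$); $q$ is rectifiable if $\ell(q)<\infty$. For a continuous map $f:X\to Y$ and a non-isolated point $x\in X$, $D_x^-f=\liminf_{z\to x,\,z\neq x}\frac{d(f(z),f(x))}{d(z,x)}\in[0,\infty]$. It is assumed that $X$ has no isolated points. *)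

From HB Require Import structures.
From mathcomp Require Import all_boot all_order all_algebra.
From mathcomp Require Import all_classical all_reals all_analysis.
Set Implicit Arguments. Unset Strict Implicit. Unset Printing Implicit Defensive.
Import Order.TTheory GRing.Theory Num.Theory numFieldNormedType.Exports.
Local Open Scope classical_set_scope.
Local Open Scope ring_scope.
Local Open Scope ereal_scope.

Definition partition (R : realType) (a b : R) (n : nat) (t : nat -> R) : Prop :=
  t 0%N = a /\ t n = b /\ (forall i : nat, (i < n)%N -> (t i <= t i.+1)%R).

(* Length of a path q : [a,b] -> X (q given as a function on R, only its
   values on [a,b] matter): sup over all partitions of the polygonal sums,
   valued in [0, +oo]. *)
Definition path_length (R : realType) (X : metricType R) (q : R -> X) (a b : R)
  : \bar R :=
  ereal_sup [set l : \bar R | exists (n : nat) (t : nat -> R),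
              partition a b n t /\
              l = ((\sum_(i < n) mdist (q (t i)) (q (t i.+1)))%R)%:E].

Definition rectifiable (R : realType) (X : metricType R) (q : R -> X) (a b : R)
  : Prop := path_length q a b < +oo.

(* Lower derivative D_x^- f = liminf_{z -> x, z <> x} d(f z, f x) / d(z, x),
   in [0, +oo], written as sup_{r > 0} inf_{0 < d(z,x) < r} ratio. *)
Definition lower_deriv (R : realType) (X Y : metricType R) (f : X -> Y) (x : X)
  : \bar R :=
  ereal_sup [set ereal_inf
                   [set ((mdist (f z) (f x) / mdist z x)%R)%:E
                   | z in [set z : X | (0 < mdist z x < r)%R]]
            | r in [set r : R | (0 < r)%R]].

Definition no_isolated_points (R : realType) (X : metricType R) : Prop :=
  forall (x : X) (e : R), (0 < e)%R -> exists z : X, z <> x /\ (mdist z x < e)%R.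

From Pilot Require Import Defs.
From HB Require Import structures.
From mathcomp Require Import all_boot all_order all_algebra.
From mathcomp Require Import all_classical all_reals all_analysis.
From mathcomp Require Import zify lra.
Import Order.TTheory GRing.Theory Num.Theory numFieldNormedType.Exports.
Local Open Scope classical_set_scope.
Local Open Scope ring_scope.

(* Where D^-_{q(t)} f > k, continuity of q makes f stretch every chord from
   q(s) to q(t), s near t, by a factor > k.  A continuous induction along [a, b]
   (a supremum argument) chains these local facts into a partition of any
   subinterval on which the polygonal length of f o q exceeds k times that of q.
   Since the polygonal length of q is at least d(q a, q b), the choice
   k = l(f o q) / d(q a, q b) yields (1) by contradiction.  For (2), refining an
   arbitrary partition of [a, b] piece by piece bounds k times its q-polygonal
   sum by l(f o q) for every k < inf D^- f. *)

Section Partitions.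
Context {R : realType}.
Implicit Types (a b u v w : R) (t s : nat -> R).

Lemma partition_itv {a b n t} :
  Defs.partition a b n t -> forall i, (i <= n)%N -> a <= t i <= b.
Proof.
move=> [t0 [tn tS]] i le_in; apply/andP; split.
  elim: i le_in => [|i IH] lt_in; first by rewrite t0.
  exact: le_trans (IH (ltnW lt_in)) (tS _ lt_in).
suff tnk_le_b k : (k <= n)%N -> t (n - k)%N <= b.
  by have := tnk_le_b (n - i)%N (leq_subr _ _); rewrite subKn.
elim: k => [|k IH] lt_kn; first by rewrite subn0 tn.
apply: le_trans (IH (ltnW lt_kn)).
have -> : (n - k = (n - k.+1).+1)%N by lia.
by apply: tS; lia.
Qed.

Lemma partition1 {u v} : u <= v -> Defs.partition u v 1 (fun j => if j == 0%N then u else v).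
Proof. by move=> le_uv; split => //; split => // [[|]]. Qed.

Definition cat_partition n1 s1 s2 : nat -> R :=
  fun j => if (j <= n1)%N then s1 j else s2 (j - n1)%N.

Lemma cat_partition_shift n1 s1 s2 i :
  s1 n1 = s2 0%N -> cat_partition n1 s1 s2 (n1 + i) = s2 i.
Proof.
move=> s12; rewrite /cat_partition; case: ifP => [le_in|_]; last by congr s2; lia.
have -> : i = 0%N by lia.
by rewrite addn0 s12.
Qed.

Lemma partition_cat u v w n1 s1 n2 s2 :
  Defs.partition u v n1 s1 -> Defs.partition v w n2 s2 ->
  Defs.partition u w (n1 + n2) (cat_partition n1 s1 s2).
Proof.
move=> [s10 [s1n s1S]] [s20 [s2n s2S]].
have s12 : s1 n1 = s2 0%N by rewrite s1n s20.
split; first by rewrite /cat_partition leq0n s10.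
split; first by rewrite cat_partition_shift.
move=> i lt_i; have [lt_in1|le_n1i] := ltnP i n1.
  by rewrite /cat_partition (ltnW lt_in1) lt_in1; apply: s1S.
rewrite -(subnKC le_n1i) -addnS !cat_partition_shift //; apply: s2S; lia.
Qed.

End Partitions.

Section PolygonalSums.
Context {R : realType} {X : metricType R}.
Implicit Types (g : R -> X) (a b : R) (t s : nat -> R).

Definition polygonal_sum g n t : R := \sum_(i < n) mdist (g (t i)) (g (t i.+1)).

Lemma polygonal_sum_ge0 g n t : 0 <= polygonal_sum g n t.
Proof. by apply: sumr_ge0 => i _; apply: mdist_ge0. Qed.

Lemma polygonal_sum_cat g n1 s1 n2 s2 : s1 n1 = s2 0%N ->
  polygonal_sum g (n1 + n2) (cat_partition n1 s1 s2) =
  polygonal_sum g n1 s1 + polygonal_sum g n2 s2.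
Proof.
move=> s12; rewrite /polygonal_sum big_split_ord /=; congr (_ + _).
  by apply: eq_bigr => i _; rewrite /cat_partition (ltnW (ltn_ord i)) ltn_ord.
by apply: eq_bigr => i _; rewrite -addnS !cat_partition_shift.
Qed.

Lemma mdist_le_polygonal_sum g n t : mdist (g (t 0%N)) (g (t n)) <= polygonal_sum g n t.
Proof.
elim: n => [|n IH]; first by rewrite /polygonal_sum big_ord0 mdistxx.
rewrite /polygonal_sum big_ord_recr /=.
apply: le_trans (metric_triangle _ (g (t n)) _) _.
exact: lerD IH (lexx _).
Qed.

Lemma polygonal_sum_le_path_length g {a b n t} :
  Defs.partition a b n t -> ((polygonal_sum g n t)%:E <= path_length g a b)%E.
Proof. by move=> pt; apply: ereal_sup_ubound; exists n, t. Qed.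

Lemma path_length_ge0 g a b : a <= b -> (0 <= path_length g a b)%E.
Proof.
move=> le_ab; apply: le_trans _ (polygonal_sum_le_path_length g (partition1 le_ab)).
by rewrite lee_fin polygonal_sum_ge0.
Qed.

Lemma path_length_le g a b (B : R) :
  (forall n t, Defs.partition a b n t -> polygonal_sum g n t <= B) ->
  (path_length g a b <= B%:E)%E.
Proof. by move=> gB; apply: ge_ereal_sup => _ [n [t [pt ->]]]; rewrite lee_fin gB. Qed.

End PolygonalSums.

Section Stretching.
Context {R : realType}.

(* Degenerate chords (dx = 0) are exempt, so the strict inequality survives
   along pieces where q is constant. *)
Definition stretches (k dx dy : R) : Prop := 0 < dx -> k * dx < dy.

Lemma stretches_le {k dx dy} : 0 <= dx -> 0 <= dy -> stretches k dx dy -> k * dx <= dy.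
Proof.
rewrite le_eqVlt => /predU1P[<- dy_ge0 _|dx_gt0 _ /(_ dx_gt0)/ltW //].
by rewrite mulr0.
Qed.

Lemma stretchesD k dx dy dx' dy' : 0 <= dx -> 0 <= dy -> 0 <= dx' -> 0 <= dy' ->
  stretches k dx dy -> stretches k dx' dy' -> stretches k (dx + dx') (dy + dy').
Proof.
move=> dx_ge0 dy_ge0 dx'_ge0 dy'_ge0 kxy kxy' sum_gt0; rewrite mulrDr.
have [dx_gt0|] := ltP 0 dx.
  exact: ltr_leD (kxy dx_gt0) (stretches_le dx'_ge0 dy'_ge0 kxy').
rewrite le_eqVlt ltNge dx_ge0 orbF => /eqP dx0.
rewrite dx0 add0r in sum_gt0.
exact: ler_ltD (stretches_le dx_ge0 dy_ge0 kxy) (kxy' sum_gt0).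
Qed.

Lemma interval_chain (P : R -> R -> Prop) (a b : R) :
  (forall u, P u u) -> (forall u v w, P u v -> P v w -> P u w) ->
  (forall t, a <= t <= b -> exists2 d, 0 < d & forall s, a <= s <= b -> `|t - s| < d ->
     (s <= t -> P s t) /\ (t <= s -> P t s)) ->
  forall u w, a <= u -> u <= w -> w <= b -> P u w.
Proof.
move=> Prefl Ptrans Plocal u w le_au le_uw le_wb.
have le_ub : u <= b := le_trans le_uw le_wb.
pose S := [set v : R | u <= v <= b /\ forall w, u <= w <= v -> P u w].
have Su : S u.
  split=> [|w' /andP[le_uw' le_w'u]]; first by rewrite lexx le_ub.
  by have -> : w' = u by apply/eqP; rewrite eq_le le_uw' le_w'u.
have S_ub : has_ubound S by exists b => v [/andP[_ ->]].
have S_sup : has_sup S by split => //; exists u.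
set v := sup S.
have le_uv : u <= v := ub_le_sup S_ub Su.
have le_vb : v <= b by apply: ge_sup => [|x [/andP[_ ->]]]; first by exists u.
have v_ab : a <= v <= b by rewrite (le_trans le_au le_uv) le_vb.
have [d d_gt0 Pv] := Plocal v v_ab.
have P_before : forall w, u <= w -> w <= b -> w < v + d -> P u w.
  move=> w' le_uw' le_w'b lt_w'vd; have [lt_w'v|le_vw'] := ltP w' v.
    have vw'_gt0 : 0 < v - w' by rewrite subr_gt0.
    have [e [_ Pe] lt_w'e] := sup_adherent vw'_gt0 S_sup.
    by apply: Pe; rewrite le_uw' /=; apply: ltW; rewrite -/v in lt_w'e; lra.
  have [e [/andP[le_ue le_eb] Pe] lt_ve] := sup_adherent d_gt0 S_sup; rewrite -/v in lt_ve.
  have Se : S e by split=> //; rewrite le_ue.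
  have le_ev : e <= v := ub_le_sup S_ub Se.
  have near_v s : u <= s <= b -> `|v - s| < d -> (s <= v -> P s v) /\ (v <= s -> P v s).
    by move=> /andP[le_us le_sb]; apply: Pv; rewrite le_sb (le_trans le_au).
  apply: (Ptrans _ e); first by apply: Pe; rewrite lexx le_ue.
  have e_near : `|v - e| < d by rewrite ltr_norml; apply/andP; split; lra.
  have w'_near : `|v - w'| < d by rewrite ltr_norml; apply/andP; split; lra.
  apply: (Ptrans _ v).
    by apply: (near_v e _ e_near).1; rewrite ?le_ue.
  by apply: (near_v w' _ w'_near).2; rewrite ?le_uw'.
have lt_b_vd : b < v + d.
  rewrite ltNge; apply/negP => le_vdb.
  have : S (v + d / 2) by split=> [|w' /andP[? ?]]; [apply/andP; split|apply: P_before]; lra.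
  by move/(ub_le_sup S_ub); rewrite -/v; lra.
exact: P_before le_uw le_wb (le_lt_trans le_wb lt_b_vd).
Qed.

End Stretching.

Lemma mulr_le_of_forall_lt (R : realFieldType) (M x L : R) : 0 <= x -> 0 < M -> 0 <= L ->
  (forall c, 0 < c -> c < M -> c * x <= L) -> M * x <= L.
Proof.
move=> x_ge0 M_gt0 L_ge0 cxL; rewrite leNgt; apply/negP => lt_L_Mx.
have x_gt0 : 0 < x.
  by rewrite lt_neqAle x_ge0 andbT; apply: contraTneq lt_L_Mx => <-; rewrite mulr0 -leNgt.
have Lx_x : L / x * x = L by rewrite divfK // gt_eqF.
have lt_Lx_M : L / x < M by rewrite ltr_pdivrMr.
have Lx_ge0 : 0 <= L / x by rewrite divr_ge0 // ltW.
have := cxL ((L / x + M) / 2) ltac:(lra) ltac:(lra).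
by rewrite mulrAC mulrDl Lx_x; lra.
Qed.

Lemma lower_deriv_gt {R : realType} {X Y : metricType R} {f : X -> Y} {x : X} {k : R} :
  (k%:E < lower_deriv f x)%E ->
  exists2 r, 0 < r & forall z, 0 < mdist z x < r -> k * mdist z x < mdist (f z) (f x).
Proof.
move=> /ereal_sup_gt [_ [r r_gt0 <-] k_lt_inf]; exists r => // z z_near.
have : (k%:E < (mdist (f z) (f x) / mdist z x)%:E)%E.
  by apply: lt_le_trans k_lt_inf _; apply: ereal_inf_lbound; exists z.
by rewrite lte_fin -ltr_pdivlMr //; case/andP: z_near.
Qed.

Lemma continuous_itv_mdist_lt {R : realType} {X : metricType R} {q : R -> X} {a b t e : R} :
  {within `[a, b], continuous q} -> a <= t <= b -> 0 < e ->
  exists2 d, 0 < d & forall s, a <= s <= b -> `|t - s| < d -> mdist (q t) (q s) < e.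
Proof.
move=> /subspace_continuousP q_cont t_ab e_gt0.
have := q_cont t; rewrite /= in_itv /= => /(_ t_ab).
move=> /metricType_numDomainType.cvgrPdist_lt /(_ e e_gt0).
rewrite /within /= => /nbhs_ballP [d d_gt0 qd]; exists d => // s s_ab ts_lt.
by apply: (qd s); rewrite /= ?in_itv.
Qed.

Section StretchingPartitions.
Context {R : realType} {X Y : metricType R} {f : X -> Y} {q : R -> X}.

Definition stretching_partition (k u v : R) : Prop :=
  exists n s, Defs.partition u v n s /\
    stretches k (polygonal_sum q n s) (polygonal_sum (f \o q) n s).

Lemma stretching_partition_refl k u : stretching_partition k u u.
Proof.
by exists 0%N, (fun=> u); split; rewrite // /stretches /polygonal_sum big_ord0 ltxx.
Qed.

Lemma stretching_partition1 k u v : u <= v ->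
  stretches k (mdist (q u) (q v)) (mdist (f (q u)) (f (q v))) -> stretching_partition k u v.
Proof.
by move=> le_uv kuv; exists 1%N, (fun j => if j == 0%N then u else v);
  rewrite /polygonal_sum !big_ord1; split => //; apply: partition1.
Qed.

Lemma stretching_partition_trans k u v w :
  stretching_partition k u v -> stretching_partition k v w -> stretching_partition k u w.
Proof.
move=> [n1 [s1 [ps1 k1]]] [n2 [s2 [ps2 k2]]].
have s12 : s1 n1 = s2 0%N by case: ps1 => _ [-> _]; case: ps2 => ->.
exists (n1 + n2)%N, (cat_partition n1 s1 s2); split; first exact: partition_cat ps1 ps2.
by rewrite !polygonal_sum_cat //; apply: stretchesD; rewrite ?polygonal_sum_ge0.
Qed.

Lemma stretching_refinement {k u v n t} : 0 <= k -> Defs.partition u v n t ->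
  (forall i, (i < n)%N -> stretching_partition k (t i) (t i.+1)) ->
  exists N s, Defs.partition u v N s /\ k * polygonal_sum q n t <= polygonal_sum (f \o q) N s.
Proof.
move=> k_ge0 [t0 [tn tS]] stretching_pieces.
suff /(_ n (leqnn n)) : forall j, (j <= n)%N -> exists N s,
    Defs.partition u (t j) N s /\ k * polygonal_sum q j t <= polygonal_sum (f \o q) N s.
  by rewrite tn.
elim=> [|j IH] lt_jn.
  exists 0%N, (fun=> u); rewrite /polygonal_sum !big_ord0 mulr0.
  by split => //; split; rewrite ?t0.
have [N [s [ps ks]]] := IH (ltnW lt_jn).
have [N' [s' [ps' ks']]] := stretching_pieces j lt_jn.
have [s'0 [s'N' _]] := ps'.
have ss' : s N = s' 0%N by case: ps => _ [-> _].
exists (N + N')%N, (cat_partition N s s'); split; first exact: partition_cat ps ps'.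
rewrite polygonal_sum_cat // {1}/polygonal_sum big_ord_recr /= mulrDr; apply: lerD ks _.
apply: le_trans (stretches_le (polygonal_sum_ge0 _ _ _) (polygonal_sum_ge0 _ _ _) ks').
by apply: (ler_wpM2l k_ge0); rewrite -s'0 -s'N'; apply: mdist_le_polygonal_sum.
Qed.

Context {a b : R}.
Hypothesis q_cont : {within `[a, b], continuous q}.

Lemma stretches_near {k t} : a <= t <= b -> (k%:E < lower_deriv f (q t))%E ->
  exists2 d, 0 < d & forall s, a <= s <= b -> `|t - s| < d ->
    stretches k (mdist (q s) (q t)) (mdist (f (q s)) (f (q t))).
Proof.
move=> t_ab /lower_deriv_gt [r r_gt0 fq_stretch].
have [d d_gt0 qd] := continuous_itv_mdist_lt q_cont t_ab r_gt0.
exists d => // s s_ab ts_lt qst_gt0; apply: fq_stretch.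
by rewrite qst_gt0 metric_sym qd.
Qed.

Lemma stretching_partition_itv {k u w} :
  (forall t, a <= t <= b -> (k%:E < lower_deriv f (q t))%E) ->
  a <= u -> u <= w -> w <= b -> stretching_partition k u w.
Proof.
move=> k_lt_D; apply: interval_chain.
- exact: stretching_partition_refl.
- exact: stretching_partition_trans.
move=> t t_ab; have [d d_gt0 near_t] := stretches_near t_ab (k_lt_D t t_ab).
exists d => // s s_ab ts_lt; split => [le_st|le_ts]; apply: stretching_partition1 => //.
  exact: near_t.
by rewrite metric_sym [mdist (f _) _]metric_sym; apply: near_t.
Qed.

Context {L : R}.
Hypotheses (le_ab : a <= b)
  (fq_le_L : forall n s, Defs.partition a b n s -> polygonal_sum (f \o q) n s <= L).

Lemma polygonal_bound_ge0 : 0 <= L.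
Proof. exact: le_trans (polygonal_sum_ge0 _ _ _) (fq_le_L _ _ (partition1 le_ab)). Qed.

Lemma exists_lower_deriv_le : q a <> q b ->
  exists2 t, a <= t <= b & (lower_deriv f (q t) <= (L / mdist (q a) (q b))%:E)%E.
Proof.
move=> qab; set d := mdist (q a) (q b).
have d_gt0 : 0 < d by rewrite mdist_gt0; apply/eqP.
apply: contrapT => /forall2NP no_t.
have Ld_lt_D t : a <= t <= b -> ((L / d)%:E < lower_deriv f (q t))%E.
  by move=> t_ab; case: (no_t t) => // /negP; rewrite -ltNge.
have [n [s [ps stretch]]] := stretching_partition_itv Ld_lt_D (lexx a) le_ab (lexx b).
have [s0 [sn _]] := ps.
have d_le : d <= polygonal_sum q n s by rewrite /d -s0 -sn mdist_le_polygonal_sum.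
have L_le : L <= L / d * polygonal_sum q n s.
  rewrite -{1}(divfK (lt0r_neq0 d_gt0) L) ler_wpM2l // divr_ge0 ?polygonal_bound_ge0 //.
  exact: ltW.
have := stretch (lt_le_trans d_gt0 d_le); have := fq_le_L _ _ ps; lra.
Qed.

Lemma lower_deriv_mul_path_length_le M : 0 < M ->
  (forall t, a <= t <= b -> (M%:E <= lower_deriv f (q t))%E) ->
  (M%:E * path_length q a b <= L%:E)%E.
Proof.
move=> M_gt0 M_le_D.
have Mq_le_L n t : Defs.partition a b n t -> M * polygonal_sum q n t <= L.
  move=> pt; apply: mulr_le_of_forall_lt; rewrite ?polygonal_sum_ge0 ?polygonal_bound_ge0 //.
  move=> c c_gt0 lt_cM.
  have c_lt_D t' : a <= t' <= b -> (c%:E < lower_deriv f (q t'))%E.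
    by move=> t'_ab; apply: lt_le_trans (M_le_D t' t'_ab); rewrite lte_fin.
  have [|N [s [ps cq_le]]] := stretching_refinement (ltW c_gt0) pt.
    move=> i lt_in; have /andP[le_ati _] := partition_itv pt i (ltnW lt_in).
    have /andP[_ le_tib] := partition_itv pt i.+1 lt_in.
    by apply: stretching_partition_itv c_lt_D _ _ _ => //; case: pt => _ [_]; apply.
  exact: le_trans cq_le (fq_le_L _ _ ps).
have : (path_length q a b <= (L / M)%:E)%E.
  by apply: path_length_le => n t pt; rewrite ler_pdivlMr // mulrC Mq_le_L.
move/(lee_wpmul2l (ltW M_gt0 : (0 <= M%:E)%E)).
by rewrite -EFinM mulrC divfK // gt_eqF.
Qed.

End StretchingPartitions.

Theorem theorem3 (R : realType) (X Y : metricType R) (f : X -> Y)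
    (q : R -> X) (a b : R) :
  no_isolated_points X ->
  continuous f ->
  (a <= b) ->
  {within `[a, b]%classic, continuous q} ->
  rectifiable (f \o q) a b ->
  (q a <> q b ->
     exists tau : R, a <= tau <= b /\
       (lower_deriv f (q tau) * (mdist (q a) (q b))%:E
          <= path_length (f \o q) a b)%E)
  /\
  (let m := ereal_inf [set lower_deriv f (q t) | t in `[a, b]%classic] in
   (0 < m)%E -> (m < +oo)%E ->
   (m * path_length q a b <= path_length (f \o q) a b)%E).
Proof.
move=> _ _ le_ab q_cont fq_rect.
have [L fq_len] : exists L, path_length (f \o q) a b = L%:E.
  by exists (fine (path_length (f \o q) a b)); rewrite fineK // ge0_fin_numE ?path_length_ge0.
have fq_le_L n s : Defs.partition a b n s -> polygonal_sum (f \o q) n s <= L.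
  by move=> ps; rewrite -lee_fin -fq_len polygonal_sum_le_path_length.
rewrite fq_len; split.
  move=> qab; have [t t_ab D_le] := exists_lower_deriv_le q_cont le_ab fq_le_L qab.
  exists t; split => //; apply: le_trans (lee_wpmul2r _ D_le) _; first exact: mdist_ge0.
  by rewrite -EFinM divfK // lt0r_neq0 // mdist_gt0; apply/eqP.
move=> m m_gt0 m_lty.
have [M mE] : exists M, m = M%:E by exists (fine m); rewrite fineK // ge0_fin_numE ?ltW.
rewrite mE; apply: (lower_deriv_mul_path_length_le q_cont le_ab fq_le_L).
  by rewrite -lte_fin -mE.
by move=> t t_ab; rewrite -mE; apply: ereal_inf_lbound; exists t.
Qed.
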